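(* Let $f$ be convex, $C^2$, with $\nabla^2 f\succ0$ everywhere, and $L_{\text{semi}}$-semi-strongly self-concordant; let $L_{\text{est}}\ge L_{\text{semi}}$, let $x_k\in\mathbb{R}^d$ with $\nabla f(x_k)\ne0$, and let $x_{k+1}$ be the AICN iterate from $x_k$ with stepsize $\alpha_k$. Then: (i) $\|\nabla f(x_{k+1})\|_{x_k}^*\le L_{\text{est}}\alpha_k^2\big(\|\nabla f(x_k)\|_{x_k}^*\big)^2< L_{\text{est}}\big(\|\nabla f(x_k)\|_{x_k}^*\big)^2$. (ii) If moreover $0<c<1$ and $\|\nabla f(x_k)\|_{x_k}^*\le\frac{(2c+1)^2-1}{2L_{\text{est}}}$, then $\|\nabla f(x_{k+1})\|_{x_{k+1}}^*\le\frac{L_{\text{est}}\alpha_k^2}{1-c}\big(\|\nabla f(x_k)\|_{x_k}^*\big)^2$. (iii) If in addition to (ii) also $\|\nabla f(x_k)\|_{x_k}^*\le\frac{(2-c)^2-1}{2L_{\text{est}}}$, then $\|\nabla f(x_{k+1})\|_{x_{k+1}}^*\le\|\nabla f(x_k)\|_{x_k}^*$.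
   Context: Local norms: $\|h\|_x=\langle\nabla^2 f(x)h,h\rangle^{1/2}$, $\|g\|_x^*=\langle g,[\nabla^2 f(x)]^{-1}g\rangle^{1/2}$; $\|H\|_{op}=\sup_{v\neq0}\|Hv\|_x^*/\|v\|_x$ at base point $x$. $f$ is $L_{\text{semi}}$-semi-strongly self-concordant if $\|\nabla^2 f(y)-\nabla^2 f(x)\|_{op}\le L_{\text{semi}}\|y-x\|_x$ for all $x,y$ (operator norm at base point $x$). AICN step with parameter $L_{\text{est}}>0$: $x_{k+1}=x_k-\alpha_k[\nabla^2 f(x_k)]^{-1}\nabla f(x_k)$ with $\alpha_k=\frac{-1+\sqrt{1+2L_{\text{est}}\|\nabla f(x_k)\|_{x_k}^*}}{L_{\text{est}}\|\nabla f(x_k)\|_{x_k}^*}$. *)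

From HB Require Import structures.
From mathcomp Require Import all_boot all_order all_algebra.
From mathcomp Require Import all_classical all_reals all_analysis.
Set Implicit Arguments. Unset Strict Implicit. Unset Printing Implicit Defensive.
Import Order.TTheory GRing.Theory Num.Theory.
Import numFieldNormedType.Exports.
Local Open Scope ring_scope.

Definition dotp (R : realType) (d : nat) (u v : 'cV[R]_d) : R := (u^T *m v) 0 0.

(* Local norm  ||h||_x = <H h, h>^{1/2}, with H = Hessian at x. *)
Definition lnorm (R : realType) (d : nat) (H : 'M[R]_d) (h : 'cV[R]_d) : R :=
  Num.sqrt (dotp (H *m h) h).

Definition dnorm (R : realType) (d : nat) (H : 'M[R]_d) (g : 'cV[R]_d) : R :=
  Num.sqrt (dotp g (invmx H *m g)).

(* grad is the gradient and hess the Hessian of f, f being C^2: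
   directional derivatives of f are <grad x, v>, directional derivatives of
   grad are hess x *m v, and hess is continuous. *)
Definition C2_with (R : realType) (d : nat) (f : 'cV[R]_d -> R)
  (grad : 'cV[R]_d -> 'cV[R]_d) (hess : 'cV[R]_d -> 'M[R]_d) : Prop :=
  (forall x v : 'cV[R]_d, is_derive x v f (dotp (grad x) v)) /\
  (forall x v : 'cV[R]_d, is_derive x v grad (hess x *m v)) /\
  continuous hess.

Definition hess_pd (R : realType) (d : nat) (hess : 'cV[R]_d -> 'M[R]_d) : Prop :=
  forall x v : 'cV[R]_d, v != 0 -> 0 < dotp (hess x *m v) v.

(* L-semi-strong self-concordance:
   ||hess y - hess x||_op <= L ||y - x||_x, where the operator norm at x is
   sup_{v <> 0} ||A v||_x^* / ||v||_x; the bound on the sup is written out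
   as the bound on each quotient (multiplied out). *)
Definition semi_strongly_sc (R : realType) (d : nat)
  (hess : 'cV[R]_d -> 'M[R]_d) (L : R) : Prop :=
  forall x y v : 'cV[R]_d, v != 0 ->
    dnorm (hess x) ((hess y - hess x) *m v) / lnorm (hess x) v
      <= L * lnorm (hess x) (y - x).

Definition aicn_alpha (R : realType) (Lest G : R) : R :=
  (-1 + Num.sqrt (1 + 2 * Lest * G)) / (Lest * G).

Definition aicn_step (R : realType) (d : nat) (grad : 'cV[R]_d -> 'cV[R]_d)
  (hess : 'cV[R]_d -> 'M[R]_d) (Lest : R) (x : 'cV[R]_d) : 'cV[R]_d :=
  x - aicn_alpha Lest (dnorm (hess x) (grad x)) *: (invmx (hess x) *m grad x).

From HB Require Import structures.
From mathcomp Require Import all_boot all_order all_algebra.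
From mathcomp Require Import all_classical all_reals all_analysis.
From mathcomp Require Import ring lra.
Set Implicit Arguments. Unset Strict Implicit. Unset Printing Implicit Defensive.
Import Order.TTheory GRing.Theory Num.Theory.
Import numFieldNormedType.Exports.
Local Open Scope classical_set_scope.
Local Open Scope ring_scope.

(* Write H = hess x, g = grad x, G = ||g||_x^* and h = x+ - x = -alpha H^-1 g, so that
   ||h||_x = alpha G; the stepsize is the positive root of L alpha^2 G = 2 (1 - alpha).
   Semi-strong self-concordance integrated along [x, x+h] bounds the Newton residual:
   ||grad (x + h) - g - H h||_x^* <= L/2 ||h||_x^2.  As g + H h = (1 - alpha) g, this gives
   (i): ||grad x+||_x^* <= (1 - alpha) G + L/2 alpha^2 G^2 = L alpha^2 G^2.
   Self-concordance also compares Hessians: hess y <= (1 + L ||y - x||_x) hess x.  From x to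
   x+ it bounds a = ||x - x+||_{x+} by (L a)^2 <= (1 + s) s^2, where s = L alpha G =
   sqrt (1 + 2 L G) - 1 <= 2 c; from x+ to x it transfers (i) to the norm at x+ at the cost
   of a factor sqrt (1 + L a) <= 1 / (1 - c), which is (ii).  Under the second bound on G,
   alpha >= 2 / (3 - c), which makes the factor of (ii) at most 1, hence (iii).
   All norm inequalities need a symmetric Hessian, which continuity of hess provides. *)

Section DotProduct.
Variables (R : realType) (d : nat).
Implicit Types (u v w : 'cV[R]_d).

Lemma dotpE u v : dotp u v = \sum_k u k 0 * v k 0.
Proof. by rewrite /dotp mxE; apply: eq_bigr => k _; rewrite mxE. Qed.

Lemma dotpC u v : dotp u v = dotp v u.
Proof. by rewrite !dotpE; apply: eq_bigr => k _; rewrite mulrC. Qed.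

Lemma dotpDl u v w : dotp (u + v) w = dotp u w + dotp v w.
Proof. by rewrite !dotpE -big_split; apply: eq_bigr => k _; rewrite mxE mulrDl. Qed.

Lemma dotpZl (k : R) u w : dotp (k *: u) w = k * dotp u w.
Proof. by rewrite !dotpE mulr_sumr; apply: eq_bigr => i _; rewrite mxE mulrA. Qed.

Lemma dotpBl u v w : dotp (u - v) w = dotp u w - dotp v w.
Proof. by rewrite dotpDl -scaleN1r dotpZl mulN1r. Qed.

Lemma dotpZr (k : R) u w : dotp w (k *: u) = k * dotp w u.
Proof. by rewrite dotpC dotpZl dotpC. Qed.

Lemma dotpBr u v w : dotp w (u - v) = dotp w u - dotp w v.
Proof. by rewrite dotpC dotpBl -!(dotpC w). Qed.

Lemma dotp0l w : dotp 0 w = 0.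
Proof. by rewrite -(scale0r 0) dotpZl mul0r. Qed.

Lemma dotp0r w : dotp w 0 = 0.
Proof. by rewrite dotpC dotp0l. Qed.

Lemma continuous_dotpl w : continuous (fun u : 'cV[R]_d => dotp u w).
Proof.
rewrite (_ : (fun u => _) = fun u => \sum_(k < d) u k 0 * w k 0); last first.
  by apply: funext => u; rewrite dotpE.
apply: continuous_big; first exact: add_continuous.
by move=> k _ u; apply: continuousM; [exact: coord_continuous|exact: cst_continuous].
Qed.

Lemma continuous_dotp_mulmx u v : continuous (fun M : 'M[R]_d => dotp (M *m v) u).
Proof.
rewrite (_ : (fun M => _) = fun M : 'M[R]_d => \sum_(k < d) (\sum_(j < d) M k j * v j 0) * u k 0).
  apply: continuous_big; first exact: add_continuous.
  move=> k _ M; apply: continuousM; last exact: cst_continuous.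
  apply: continuous_big; first exact: add_continuous.
  by move=> j _ N; apply: continuousM; [exact: coord_continuous|exact: cst_continuous].
by apply: funext => M; rewrite dotpE; apply: eq_bigr => k _; rewrite mxE.
Qed.

End DotProduct.

Section LineDerivatives.
Variable R : realType.

Lemma is_derive_line (V W : normedModType R) (F : V -> W) (p u : V) (t : R) (dF : W) :
  is_derive (p + t *: u) u F dF -> is_derive t 1 (fun s : R => F (p + s *: u)) dF.
Proof.
move=> [dFp <-].
have E : (fun h : R => h^-1 *: (((fun s => F (p + s *: u)) \o shift t) (h *: 1)
                                 - F (p + t *: u)))
       = (fun h => h^-1 *: ((F \o shift (p + t *: u)) (h *: u) - F (p + t *: u))).
  apply: funext => h /=; congr (_ *: (F _ - _)).
  by rewrite [h%:A]mulr1 scalerDl addrCA.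
by split; rewrite /derivable /derive ?E.
Qed.

Lemma is_derive_dotpl (d : nat) (V : normedModType R) (F : V -> 'cV[R]_d)
    (a v : V) (dF w : 'cV[R]_d) :
  is_derive a v F dF -> is_derive a v (fun y => dotp (F y) w) (dotp dF w).
Proof.
move=> [dFa dFE].
have qF : (fun h : R => h^-1 *: ((F \o shift a) (h *: v) - F a)) @ 0^' --> dF.
  by rewrite -dFE; exact: dFa.
have qdot : (fun h : R => h^-1 *: (((fun y => dotp (F y) w) \o shift a) (h *: v)
                                   - dotp (F a) w)) @ 0^' --> dotp dF w.
  rewrite (_ : (fun h => _) =
     (fun u => dotp u w) \o (fun h : R => h^-1 *: ((F \o shift a) (h *: v) - F a))).
    apply: cvg_comp qF _; exact: continuous_dotpl.
  by apply: funext => h /=; rewrite dotpZl dotpBl.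
by split; [exact: cvgP qdot | exact: cvg_lim qdot].
Qed.

Lemma MVT_open (k dk : R -> R) (a b : R) : a < b ->
    (forall s : R, is_derive s (1 : R) k (dk s)) ->
  exists2 c, a < c < b & k b - k a = dk c * (b - a).
Proof.
move=> ab dk_k.
have kc : {within `[a, b], continuous k}.
  by apply: derivable_within_continuous => s _; exact: ex_derive.
have [c] := MVT ab (fun s _ => dk_k s) kc.
by rewrite in_itv; exists c.
Qed.

End LineDerivatives.

Lemma normr_shift2_le (R : numFieldType) (V : normedModType R) (x w z : V) (a b t : R) :
  0 <= a <= t -> 0 <= b <= t -> `|x - (x + a *: w + b *: z)| <= t * (`|w| + `|z|).
Proof.
move=> /andP[a0 ta] /andP[b0 tb].
rewrite -addrA opprD addNKr normrN; apply: le_trans (ler_normD _ _) _.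
by rewrite !normrZ !ger0_norm // mulrDr lerD // ler_wpM2r.
Qed.

Section HessianSymmetry.
Variables (R : realType) (d : nat) (f : 'cV[R]_d -> R).
Variables (grad : 'cV[R]_d -> 'cV[R]_d) (hess : 'cV[R]_d -> 'M[R]_d).
Hypothesis f_grad : forall x v, is_derive x v f (dotp (grad x) v).
Hypothesis grad_hess : forall x v, is_derive x v grad (hess x *m v).

Lemma second_difference_mean_value (x u v : 'cV[R]_d) (t : R) : 0 < t ->
  exists xi eta, [/\ 0 < xi < t, 0 < eta < t &
    f (x + t *: v + t *: u) - f (x + t *: u) - (f (x + t *: v) - f x)
      = t * t * dotp (hess (x + xi *: u + eta *: v) *m v) u].
Proof.
move=> t0.
pose k s := f (x + t *: v + s *: u) - f (x + s *: u).
pose dk s := dotp (grad (x + t *: v + s *: u)) u - dotp (grad (x + s *: u)) u.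
have [xi xiI kE] : exists2 xi, 0 < xi < t & k t - k 0 = dk xi * (t - 0).
  by apply: (MVT_open t0) => s; apply: is_deriveB; apply: is_derive_line; exact: f_grad.
pose m r := dotp (grad (x + xi *: u + r *: v)) u.
pose dm r := dotp (hess (x + xi *: u + r *: v) *m v) u.
have [eta etaI mE] : exists2 eta, 0 < eta < t & m t - m 0 = dm eta * (t - 0).
  by apply: (MVT_open t0) => r; exact: is_derive_line (is_derive_dotpl _ (grad_hess _ _)).
exists xi, eta; split => //.
move: kE mE; rewrite /k /dk /m /dm !scale0r !addr0 !subr0 => ->.
by rewrite [x + t *: v + _]addrAC => ->; ring.
Qed.

Hypothesis hess_cont : continuous hess.

(* Schwarz: both mixed derivatives are attained, at points close to x, as the same second
   difference of f divided by t^2, and hess is continuous. *)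
Lemma hess_sym (x u v : 'cV[R]_d) : dotp (hess x *m v) u = dotp (hess x *m u) v.
Proof.
pose F1 y := dotp (hess y *m v) u; pose F2 y := dotp (hess y *m u) v.
have F1x : F1 @ x --> F1 x.
  exact: cvg_comp _ _ (@hess_cont x) (@continuous_dotp_mulmx _ _ u v (hess x)).
have F2x : F2 @ x --> F2 x.
  exact: cvg_comp _ _ (@hess_cont x) (@continuous_dotp_mulmx _ _ v u (hess x)).
rewrite -/(F1 x) -/(F2 x); apply/eqP; rewrite -subr_eq0 -normr_le0; apply/ler_addgt0Pr => e e0.
rewrite add0r; have e20 : 0 < e / 2 by rewrite divr_gt0.
move/cvgrPdist_lt: F1x => /(_ _ e20) /nbhs_normP [r1 r10 near1].
move/cvgrPdist_lt: F2x => /(_ _ e20) /nbhs_normP [r2 r20 near2].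
have r0 : 0 < Num.min r1 r2 by rewrite lt_min r10 r20.
have uv0 : 0 <= `|u| + `|v| by rewrite addr_ge0.
pose t := Num.min r1 r2 / (`|u| + `|v| + 1).
have t0 : 0 < t by rewrite divr_gt0 // ltr_wpDl.
have tuv : t * (`|u| + `|v|) < Num.min r1 r2.
  by rewrite /t mulrAC ltr_pdivrMr ?ltr_wpDl // ltr_pM2l // ltrDl.
have close a b (w z : 'cV[R]_d) : 0 < a < t -> 0 < b < t ->
    `|w| + `|z| = `|u| + `|v| -> `|x - (x + a *: w + b *: z)| < Num.min r1 r2.
  move=> /andP[/ltW a0 /ltW ta] /andP[/ltW b0 /ltW tb] wz.
  by rewrite -wz in tuv; apply: le_lt_trans tuv; rewrite normr_shift2_le ?a0 ?ta ?b0 ?tb.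
have [xi [eta [xiI etaI E1]]] := second_difference_mean_value x u v t0.
have [xi' [eta' [xiI' etaI' E2]]] := second_difference_mean_value x v u t0.
have F12 : F1 (x + xi *: u + eta *: v) = F2 (x + xi' *: v + eta' *: u).
  have tt0 : t * t != 0 by rewrite mulf_neq0 // gt_eqF.
  apply: (mulfI tt0); rewrite /F1 /F2 -E1 -E2 [x + t *: u + t *: v]addrAC.
  ring.
have := close _ _ _ _ xiI etaI erefl.
rewrite lt_min => /andP[/near1 /= lt1 _].
have := close _ _ _ _ xiI' etaI' (addrC _ _).
rewrite lt_min => /andP[_ /near2 /=]; rewrite -F12 => lt2.
set p := F1 (x + xi *: u + eta *: v) in lt1 lt2.
have -> : F1 x - F2 x = (F1 x - p) - (F2 x - p) by ring.
by rewrite (splitr e); apply: le_trans (ler_normB _ _) _; rewrite ltW // ltrD.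
Qed.

End HessianSymmetry.

Definition sym_pd (R : realType) (d : nat) (H : 'M[R]_d) : Prop :=
  (forall u v, dotp (H *m v) u = dotp (H *m u) v) /\
  (forall v, v != 0 -> 0 < dotp (H *m v) v).

Section LocalNorms.
Variables (R : realType) (d : nat) (H : 'M[R]_d).
Hypothesis H_spd : sym_pd H.
Implicit Types (u v g : 'cV[R]_d).

Lemma form_ge0 v : 0 <= dotp (H *m v) v.
Proof.
have [->|/H_spd.2/ltW //] := eqVneq v 0.
by rewrite dotp0r.
Qed.

Lemma sym_pd_unitmx : H \in unitmx.
Proof.
rewrite unitmxE unitfE; apply/negP => /det0P [w w0 wH].
have : 0 < dotp (H *m w^T) w^T.
  by apply: H_spd.2; rewrite -(inj_eq (@trmx_inj _ _ _)) trmxK trmx0.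
by rewrite dotpC /dotp trmxK mulmxA wH mul0mx mxE ltxx.
Qed.

Lemma lnorm_ge0 v : 0 <= lnorm H v. Proof. exact: sqrtr_ge0. Qed.
Lemma dnorm_ge0 g : 0 <= dnorm H g. Proof. exact: sqrtr_ge0. Qed.

Lemma lnorm_sqr v : lnorm H v ^+ 2 = dotp (H *m v) v.
Proof. by rewrite /lnorm sqr_sqrtr // form_ge0. Qed.

Lemma lnorm_invmx g : lnorm H (invmx H *m g) = dnorm H g.
Proof. by rewrite /lnorm /dnorm mulmxA mulmxV ?sym_pd_unitmx // mul1mx dotpC. Qed.

Lemma dnorm_sqr g : dnorm H g ^+ 2 = dotp g (invmx H *m g).
Proof. by rewrite -lnorm_invmx lnorm_sqr mulmxA mulmxV ?sym_pd_unitmx // mul1mx dotpC. Qed.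

Lemma lnormZ (k : R) v : lnorm H (k *: v) = `|k| * lnorm H v.
Proof.
by rewrite /lnorm -scalemxAr dotpZl dotpZr mulrA -expr2 sqrtrM ?sqr_ge0 // sqrtr_sqr.
Qed.

Lemma lnormN v : lnorm H (- v) = lnorm H v.
Proof. by rewrite -scaleN1r lnormZ normrN normr1 mul1r. Qed.

Lemma form_cauchy_schwarz u v :
  dotp (H *m u) v ^+ 2 <= dotp (H *m u) u * dotp (H *m v) v.
Proof.
have [->|/H_spd.2 v0] := eqVneq v 0; first by rewrite dotp0r mulmx0 dotp0l expr0n mulr0.
set A := dotp (H *m u) u; set B := dotp (H *m u) v; set P := dotp (H *m v) v.
have := form_ge0 (u - (B / P) *: v).
rewrite mulmxBr -scalemxAr !(dotpBl, dotpBr, dotpZl, dotpZr) (H_spd.1 u v) -/A -/B -/P.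
move=> /(mulr_ge0 (ltW v0)).
suff -> : P * (A - B / P * B - (B / P * B - B / P * (B / P * P))) = A * P - B ^+ 2.
  by rewrite subr_ge0.
by field; rewrite gt_eqF.
Qed.

Lemma normr_dotp_le u g : `|dotp u g| <= lnorm H u * dnorm H g.
Proof.
have -> : dotp u g = dotp (H *m u) (invmx H *m g).
  by rewrite -H_spd.1 mulmxA mulmxV ?sym_pd_unitmx // mul1mx dotpC.
rewrite -lnorm_invmx /lnorm -sqrtrM ?form_ge0 // -sqrtr_sqr ler_sqrt.
  exact: form_cauchy_schwarz.
by rewrite mulr_ge0 ?form_ge0.
Qed.

Lemma dnorm_le_of_dotp g (K : R) :
  0 <= K -> (forall z, dotp g z <= K * lnorm H z) -> dnorm H g <= K.
Proof.
move=> K0 /(_ (invmx H *m g)); rewrite lnorm_invmx -dnorm_sqr => gK.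
have := dnorm_ge0 g; nra.
Qed.

End LocalNorms.

Lemma dnorm_le_sqrt_mul (R : realType) (d : nat) (A B : 'M[R]_d) (k : R) :
  sym_pd A -> sym_pd B -> 0 <= k ->
  (forall v, dotp (A *m v) v <= k * dotp (B *m v) v) ->
  forall g, dnorm B g <= Num.sqrt k * dnorm A g.
Proof.
move=> A_spd B_spd k0 AkB g; apply: dnorm_le_of_dotp => //.
  by rewrite mulr_ge0 ?sqrtr_ge0 ?dnorm_ge0.
move=> z; apply: le_trans (ler_norm _) _; rewrite dotpC.
apply: le_trans (normr_dotp_le A_spd z g) _.
rewrite [leRHS]mulrAC ler_wpM2r ?dnorm_ge0 // /lnorm -sqrtrM // ler_sqrt //.
by rewrite mulr_ge0 // form_ge0.
Qed.

Lemma le1_of_sqr_le_cubic (R : realFieldType) (c s w : R) :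
  0 < c < 1 -> 0 <= s <= 2 * c -> 0 <= w -> w ^+ 2 <= (1 + s) * s ^+ 2 ->
  (1 + w) * (1 - c) ^+ 2 <= 1.
Proof.
move=> /andP[c0 c1] /andP[s0 s2c] w0 ws.
have w2c : w ^+ 2 <= (1 + 2 * c) * (2 * c) ^+ 2.
  apply: le_trans ws _; apply: ler_pM; rewrite ?lerD2l ?lerXn2r ?nnegrE //; nra.
set m := (1 - c) ^+ 2.
(* The claim is w m <= c (2 - c); after squaring, the gap is c^3 times this quartic. *)
have quartic : 0 <= 4 + 9 * c - 32 * c ^+ 2 + 28 * c ^+ 3 - 8 * c ^+ 4.
  have : 0 <= c * (1 - c) by nra.
  nra.
have wm2 : (w * m) ^+ 2 <= (c * (2 - c)) ^+ 2.
  rewrite exprMn; apply: le_trans (ler_wpM2r (sqr_ge0 m) w2c) _.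
  rewrite -subr_ge0 /m.
  have -> : (c * (2 - c)) ^+ 2 - (1 + 2 * c) * (2 * c) ^+ 2 * ((1 - c) ^+ 2) ^+ 2
          = c ^+ 3 * (4 + 9 * c - 32 * c ^+ 2 + 28 * c ^+ 3 - 8 * c ^+ 4) by ring.
  by rewrite mulr_ge0 // exprn_ge0 // ltW.
have wm : w * m <= c * (2 - c).
  have c2c : 0 <= c * (2 - c) by rewrite mulr_ge0 //; lra.
  have wm0 : 0 <= w * m by rewrite mulr_ge0 // sqr_ge0.
  by rewrite -ler_sqr ?nnegrE.
have m1 : m + c * (2 - c) = 1 by rewrite /m; ring.
by rewrite mulrDl mul1r -[leRHS]m1 lerD2l.
Qed.

Section AICNStepsize.
Variables (R : realType) (L G : R).
Hypotheses (L0 : 0 < L) (G0 : 0 < G).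
Local Notation q := (Num.sqrt (1 + 2 * L * G)).
Local Notation alpha := (aicn_alpha L G).

Lemma aicn_root_gt1 : 1 < q.
Proof.
have LG : 0 < 2 * L * G by rewrite !mulr_gt0.
by rewrite -[X in X < _]sqrtr1 ltr_sqrt; lra.
Qed.

Lemma aicn_alpha_mulE : alpha * (L * G) = q - 1.
Proof. by rewrite /aicn_alpha addrC mulfVK // mulf_neq0 // gt_eqF. Qed.

Lemma aicn_alpha_rootE : alpha * (q + 1) = 2.
Proof.
have LG0 : L * G != 0 by rewrite mulf_neq0 // gt_eqF.
have q2 : q ^+ 2 = 1 + 2 * L * G by rewrite sqr_sqrtr // addr_ge0 // ltW ?mulr_gt0.
apply: (mulIf LG0); rewrite mulrAC aicn_alpha_mulE.
transitivity (q ^+ 2 - 1); first by ring.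
by rewrite q2; ring.
Qed.

Lemma aicn_alpha_gt0 : 0 < alpha.
Proof. have := aicn_alpha_rootE; have := aicn_root_gt1; nra. Qed.

Lemma aicn_alpha_lt1 : alpha < 1.
Proof. have := aicn_alpha_rootE; have := aicn_root_gt1; nra. Qed.

Lemma aicn_alpha_sqrE : L * alpha ^+ 2 * G = 2 * (1 - alpha).
Proof.
transitivity (alpha * (alpha * (L * G))); first by ring.
by rewrite aicn_alpha_mulE; have := aicn_alpha_rootE; lra.
Qed.

Lemma aicn_alpha_sqr_lt : L * alpha ^+ 2 * G ^+ 2 < L * G ^+ 2.
Proof.
have a0 := aicn_alpha_gt0; have a1 := aicn_alpha_lt1.
have : 0 < (1 - alpha ^+ 2) * (L * G ^+ 2).
  by rewrite mulr_gt0 ?mulr_gt0 ?exprn_gt0 // subr_gt0 expr_lt1 // ltW.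
lra.
Qed.

Lemma aicn_root_le (b : R) :
  0 <= b -> G <= (b ^+ 2 - 1) / (2 * L) -> q <= b.
Proof.
move=> b0; rewrite ler_pdivlMr ?mulr_gt0 // => Gb.
by rewrite -(ger0_norm b0) -sqrtr_sqr ler_sqrt ?sqr_ge0 //; lra.
Qed.

End AICNStepsize.

Lemma semi_strongly_sc_le (R : realType) (d : nat) (hess : 'cV[R]_d -> 'M[R]_d)
    (L L' : R) :
  semi_strongly_sc hess L -> L <= L' -> semi_strongly_sc hess L'.
Proof.
move=> hess_sc LL' x y v v0; apply: le_trans (hess_sc x y v v0) _.
by rewrite ler_wpM2r // lnorm_ge0.
Qed.

Section SemiStronglySelfConcordant.
Variables (R : realType) (d : nat) (L : R).
Variables (grad : 'cV[R]_d -> 'cV[R]_d) (hess : 'cV[R]_d -> 'M[R]_d).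
Hypothesis grad_hess : forall x v, is_derive x v grad (hess x *m v).
Hypothesis hess_spd : forall x, sym_pd (hess x).
Hypothesis hess_sc : semi_strongly_sc hess L.
Hypothesis L0 : 0 < L.
Implicit Types (x y u v z : 'cV[R]_d).

Lemma dotp_hess_diff_le x y u v :
  dotp ((hess y - hess x) *m u) v
    <= L * lnorm (hess x) u * lnorm (hess x) (y - x) * lnorm (hess x) v.
Proof.
have [->|u0] := eqVneq u 0.
  by rewrite mulmx0 dotp0l /lnorm mulmx0 dotp0l sqrtr0 mulr0 !mul0r.
apply: le_trans (ler_norm _) _; rewrite dotpC.
apply: le_trans (normr_dotp_le (hess_spd x) _ _) _.
rewrite mulrC ler_wpM2r ?lnorm_ge0 //.
have u_pos : 0 < lnorm (hess x) u by rewrite sqrtr_gt0; exact: (hess_spd x).2.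
by rewrite mulrAC -ler_pdivrMr //; exact: hess_sc.
Qed.

Lemma hess_form_le x y v :
  dotp (hess y *m v) v <= (1 + L * lnorm (hess x) (y - x)) * dotp (hess x *m v) v.
Proof.
have -> : dotp (hess y *m v) v
          = dotp (hess x *m v) v + dotp ((hess y - hess x) *m v) v.
  by rewrite mulmxBl dotpBl; ring.
rewrite mulrDl mul1r lerD2l -(lnorm_sqr (hess_spd x)).
rewrite (_ : _ * _ ^+ 2 = L * lnorm (hess x) v * lnorm (hess x) (y - x) * lnorm (hess x) v).
  exact: dotp_hess_diff_le.
by ring.
Qed.

Lemma grad_taylor x h z :
  dotp (grad (x + h) - grad x - hess x *m h) z
    <= L / 2 * lnorm (hess x) h ^+ 2 * lnorm (hess x) z.
Proof.
set C := dotp (hess x *m h) z.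
set K := L / 2 * lnorm (hess x) h ^+ 2 * lnorm (hess x) z.
pose psi t := dotp (grad (x + t *: h)) z - (t * C + t ^+ 2 * K).
pose dpsi t := dotp (hess (x + t *: h) *m h) z - (C + 2 * t * K).
have psi_dpsi (t : R) : is_derive t (1 : R) psi (dpsi t).
  apply: is_deriveB; first exact: is_derive_line (is_derive_dotpl _ (grad_hess _ _)).
  apply: is_derive_eq.
  rewrite !scaler0 !add0r -[C%:A]/(C * 1) -[t%:A]/(t * 1) -[K *: _]/(K * _).
  by ring.
(* By self-concordance dpsi <= 0 on (0, 1), so psi 1 <= psi 0. *)
have [c /andP[c0 c1] psiE] := MVT_open ltr01 psi_dpsi.
have dpsi_le0 : dpsi c <= 0.
  have := dotp_hess_diff_le x (x + c *: h) h z.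
  rewrite addrAC subrr add0r lnormZ ger0_norm ?(ltW c0) // mulmxBl dotpBl -/C.
  have := lnorm_ge0 (hess x) h; have := lnorm_ge0 (hess x) z.
  rewrite /dpsi /K; nra.
move: psiE dpsi_le0; rewrite /psi scale0r addr0 scale1r !dotpBl -/C; lra.
Qed.

Variable x : 'cV[R]_d.
Hypothesis grad_neq0 : grad x != 0.
Local Notation G := (dnorm (hess x) (grad x)).
Local Notation alpha := (aicn_alpha L G).
Local Notation x1 := (aicn_step grad hess L x).

Lemma dnorm_grad_gt0 : 0 < G.
Proof.
rewrite -(lnorm_invmx (hess_spd x)) /lnorm sqrtr_gt0; apply: (hess_spd x).2.
apply: contraNneq grad_neq0 => /(congr1 (mulmx (hess x))).
by rewrite mulmxA mulmxV ?sym_pd_unitmx // mul1mx mulmx0 => ->.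
Qed.

Lemma aicn_step_subr : x1 - x = (- alpha) *: (invmx (hess x) *m grad x).
Proof. by rewrite /aicn_step addrAC subrr add0r scaleNr. Qed.

Lemma hess_mul_aicn_step : hess x *m (x1 - x) = (- alpha) *: grad x.
Proof.
by rewrite aicn_step_subr -scalemxAr mulmxA mulmxV ?sym_pd_unitmx // mul1mx.
Qed.

Lemma lnorm_aicn_step : lnorm (hess x) (x1 - x) = alpha * G.
Proof.
rewrite aicn_step_subr lnormZ lnorm_invmx // normrN gtr0_norm //.
exact: aicn_alpha_gt0 L0 dnorm_grad_gt0.
Qed.

Lemma aicn_grad_dnorm_le : dnorm (hess x) (grad x1) <= L * alpha ^+ 2 * G ^+ 2.
Proof.
have G0 := dnorm_grad_gt0.
have a0 := aicn_alpha_gt0 L0 G0; have a1 := aicn_alpha_lt1 L0 G0.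
have aG := aicn_alpha_sqrE L0 G0.
apply: (dnorm_le_of_dotp (hess_spd x)) => [|z].
  by rewrite mulr_ge0 ?sqr_ge0 // mulr_ge0 ?sqr_ge0 // ltW.
have gz : dotp (grad x) z <= G * lnorm (hess x) z.
  rewrite dotpC mulrC; apply: le_trans (ler_norm _) _.
  exact: normr_dotp_le (hess_spd x) z (grad x).
have := grad_taylor x (x1 - x) z.
rewrite subrKC lnorm_aicn_step hess_mul_aicn_step !dotpBl dotpZl.
have -> : L / 2 * (alpha * G) ^+ 2 = L * alpha ^+ 2 * G * G / 2 by ring.
have -> : L * alpha ^+ 2 * G ^+ 2 = L * alpha ^+ 2 * G * G by ring.
rewrite aG.
have a1' : 0 <= 1 - alpha by rewrite subr_ge0 ltW.
have := ler_wpM2l a1' gz; lra.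
Qed.

Lemma aicn_next_dnorm_le (c : R) : 0 < c < 1 ->
  G <= ((2 * c + 1) ^+ 2 - 1) / (2 * L) ->
  dnorm (hess x1) (grad x1) <= L * alpha ^+ 2 / (1 - c) * G ^+ 2.
Proof.
move=> /andP[c0 c1] Gc; have G0 := dnorm_grad_gt0.
set a := lnorm (hess x1) (x - x1).
have step_le : L * (alpha * G) <= 2 * c.
  rewrite mulrCA aicn_alpha_mulE // lerBlDr.
  by apply: aicn_root_le Gc => //; rewrite addr_ge0 ?mulr_ge0 // ltW.
have a_le : (L * a) ^+ 2 <= (1 + L * (alpha * G)) * (L * (alpha * G)) ^+ 2.
  have := hess_form_le x x1 (x - x1).
  rewrite -(lnorm_sqr (hess_spd x1)) -(lnorm_sqr (hess_spd x)) -/a.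
  rewrite -[x - x1]opprB lnormN lnorm_aicn_step.
  move=> /(ler_wpM2l (sqr_ge0 L)); rewrite !exprMn; lra.
have contraction : (1 + L * a) * (1 - c) ^+ 2 <= 1.
  have a0 := aicn_alpha_gt0 L0 G0.
  apply: le1_of_sqr_le_cubic a_le; first by rewrite c0 c1.
    by rewrite step_le (mulr_ge0 (ltW L0)) // (mulr_ge0 (ltW a0) (ltW G0)).
  by rewrite mulr_ge0 ?lnorm_ge0 // ltW.
have La0 : 0 <= 1 + L * a by rewrite addr_ge0 ?mulr_ge0 ?lnorm_ge0 // ltW.
have c1' : 0 <= 1 - c by rewrite subr_ge0 ltW.
have sqrt_le : Num.sqrt (1 + L * a) * (1 - c) <= 1.
  by rewrite -(ger0_norm c1') -sqrtr_sqr -sqrtrM // -[leRHS]sqrtr1 ler_sqrt.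
have hess_ratio := dnorm_le_sqrt_mul (hess_spd x) (hess_spd x1) La0 (hess_form_le x1 x).
rewrite mulrAC ler_pdivlMr ?subr_gt0 //.
apply: le_trans (ler_wpM2r c1' (hess_ratio _)) _.
rewrite [leLHS]mulrAC; apply: le_trans (ler_wpM2r (dnorm_ge0 _ _) sqrt_le) _.
by rewrite mul1r aicn_grad_dnorm_le.
Qed.

Lemma aicn_next_dnorm_le_dnorm (c : R) : 0 < c < 1 ->
  G <= ((2 * c + 1) ^+ 2 - 1) / (2 * L) -> G <= ((2 - c) ^+ 2 - 1) / (2 * L) ->
  dnorm (hess x1) (grad x1) <= G.
Proof.
move=> c01 Gc Gc'; apply: le_trans (aicn_next_dnorm_le c01 Gc) _.
have G0 := dnorm_grad_gt0; have a0 := aicn_alpha_gt0 L0 G0.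
move: c01 => /andP[c0 c1].
have q_le : Num.sqrt (1 + 2 * L * G) <= 2 - c by apply: aicn_root_le Gc' => //; lra.
have alpha_ge : 2 <= alpha * (3 - c).
  have := ler_wpM2l (ltW a0) q_le; have := aicn_alpha_rootE L0 G0; lra.
have alpha_ge' : 1 + c <= 2 * alpha by nra.
rewrite (_ : _ * G ^+ 2 = L * alpha ^+ 2 * G * G / (1 - c)); last by ring.
rewrite aicn_alpha_sqrE // ler_pdivrMr ?subr_gt0 //; nra.
Qed.

End SemiStronglySelfConcordant.

Theorem lemma8 (R : realType) (d : nat) (f : 'cV[R]_d -> R)
  (grad : 'cV[R]_d -> 'cV[R]_d) (hess : 'cV[R]_d -> 'M[R]_d)
  (Lsemi Lest : R) (xk : 'cV[R]_d) :
  convex_function setT f ->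
  C2_with f grad hess ->
  hess_pd hess ->
  semi_strongly_sc hess Lsemi ->
  0 < Lest -> Lsemi <= Lest ->
  grad xk != 0 ->
  let G := dnorm (hess xk) (grad xk) in
  let alpha := aicn_alpha Lest G in
  let xk1 := aicn_step grad hess Lest xk in
  (* (i) *)
  (dnorm (hess xk) (grad xk1) <= Lest * alpha ^+ 2 * G ^+ 2
   /\ Lest * alpha ^+ 2 * G ^+ 2 < Lest * G ^+ 2)
  (* (ii) *)
  /\ (forall c : R, 0 < c -> c < 1 ->
        G <= ((2 * c + 1) ^+ 2 - 1) / (2 * Lest) ->
        dnorm (hess xk1) (grad xk1) <= Lest * alpha ^+ 2 / (1 - c) * G ^+ 2)
  (* (iii) *)
  /\ (forall c : R, 0 < c -> c < 1 ->
        G <= ((2 * c + 1) ^+ 2 - 1) / (2 * Lest) ->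
        G <= ((2 - c) ^+ 2 - 1) / (2 * Lest) ->
        dnorm (hess xk1) (grad xk1) <= G).
Proof.
move=> _ [f_grad [grad_hess hess_cont]] hess_pd Lsemi_sc L0 LsemiL g0; cbv zeta.
have hess_spd x : sym_pd (hess x).
  by split; [exact: hess_sym f_grad grad_hess hess_cont x | exact: hess_pd].
have hess_sc := semi_strongly_sc_le Lsemi_sc LsemiL.
have G0 := dnorm_grad_gt0 hess_spd g0.
split; first split.
- exact (aicn_grad_dnorm_le grad_hess hess_spd hess_sc L0 g0).
- exact: aicn_alpha_sqr_lt.
split=> c c0 c1; have c01 : 0 < c < 1 by rewrite c0 c1.
- exact (aicn_next_dnorm_le grad_hess hess_spd hess_sc L0 g0 c01).
- exact (aicn_next_dnorm_le_dnorm grad_hess hess_spd hess_sc L0 g0 c01).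
Qed.
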